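(* Let $\mathcal F\subseteq[\mathbb R^p\to\mathbb R^d]$ and let $\Pi_{\mathcal F}=\{\pi_f:f\in\mathcal F\}$ be the induced class of plug-in policies. Then the Natarajan dimension of $\Pi_{\mathcal F}$ is at most the VC-linear-subgraph dimension of $\mathcal F$.
   Context: $\mathcal Z=\{z\in\mathbb R^d:Az\le b\}$ is a bounded polytope with finite set of extreme points $\mathcal Z^\angle$. For $f:\mathbb R^p\to\mathbb R^d$, the plug-in policy $\pi_f$ is defined by $\pi_f(x)\in\arg\min_{z\in\mathcal Z}f(x)^\top z$, where $\pi_f(x)$ is always chosen in $\mathcal Z^\angle$, with ties broken by a fixed ordering of $\mathcal Z^\angle$ (the same ordering for all $f$ and $x$). The VC-linear-subgraph dimension of $\mathcal F$ is the largest integer $\nu$ for which there exist $x_1,\dots,x_\nu\in\mathbb R^p$, $\beta_1,\dots,\beta_\nu\in\mathbb R^d$, $t_1,\dots,t_\nu\in\mathbb R$ such that $\{(\mathbb I\{\beta_1^\top f(x_1)\le t_1\},\dots,\mathbb I\{\beta_\nu^\top f(x_\nu)\le t_\nu\}):f\in\mathcal F\}=\{0,1\}^\nu$. The Natarajan dimension of a class $\mathcal G\subseteq[\mathbb R^p\to\mathcal S]$ is the largest integer $\eta$ for which there exist $x_1,\dots,x_\eta\in\mathbb R^p$ and $s_1\neq s_1',\dots,s_\eta\neq s_\eta'\in\mathcal S$ such that $\{(\mathbb I\{g(x_1)=s_1\},\dots,\mathbb I\{g(x_\eta)=s_\eta\}):g\in\mathcal G,\ g(x_k)\in\{s_k,s_k'\}\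 \forall k\}=\{0,1\}^\eta$. *)

From HB Require Import structures.
From mathcomp Require Import all_boot all_order all_algebra.
From mathcomp Require Import boolp reals.
Set Implicit Arguments. Unset Strict Implicit. Unset Printing Implicit Defensive.
Import Order.TTheory GRing.Theory Num.Theory.
Local Open Scope ring_scope.

Section Defs.
Variable R : realType.

Definition dotv (n : nat) (u v : 'cV[R]_n) : R := \sum_(i < n) u i 0 * v i 0.

Definition in_poly (m d : nat) (A : 'M[R]_(m, d)) (b : 'cV[R]_m) (z : 'cV[R]_d) : Prop :=
  forall i : 'I_m, (A *m z) i 0 <= b i 0.

Definition bounded_poly (m d : nat) (A : 'M[R]_(m, d)) (b : 'cV[R]_m) : Prop :=
  exists M : R, forall z, in_poly A b z -> forall i : 'I_d, `|z i 0| <= M.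

Definition extreme_point (m d : nat) (A : 'M[R]_(m, d)) (b : 'cV[R]_m) (z : 'cV[R]_d) : Prop :=
  in_poly A b z /\
  forall (y w : 'cV[R]_d) (lam : R), in_poly A b y -> in_poly A b w ->
    0 < lam < 1 -> z = lam *: y + (1 - lam) *: w -> y = w.

Definition is_argmin (m d : nat) (A : 'M[R]_(m, d)) (b : 'cV[R]_m) (c v : 'cV[R]_d) : Prop :=
  in_poly A b v /\ forall z, in_poly A b z -> dotv c v <= dotv c z.

(* plug-in policy pi_f: the first element (in the fixed ordering given by the
   list ext of extreme points) lying in argmin_{z in Z} f(x)^T z *)
Definition plugin_policy (p m d : nat) (A : 'M[R]_(m, d)) (b : 'cV[R]_m)
  (ext : seq 'cV[R]_d) (f : 'cV[R]_p -> 'cV[R]_d) (x : 'cV[R]_p) : 'cV[R]_d :=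
  nth 0 ext (find (fun v => `[< is_argmin A b (f x) v >]) ext).

Definition plugin_class (p m d : nat) (A : 'M[R]_(m, d)) (b : 'cV[R]_m)
  (ext : seq 'cV[R]_d) (F : ('cV[R]_p -> 'cV[R]_d) -> Prop)
  : ('cV[R]_p -> 'cV[R]_d) -> Prop :=
  fun g => exists f, F f /\ g = plugin_policy A b ext f.

Definition vc_linear_subgraph_shatters (p d : nat)
  (F : ('cV[R]_p -> 'cV[R]_d) -> Prop) (nu : nat) : Prop :=
  exists (xs : 'I_nu -> 'cV[R]_p) (betas : 'I_nu -> 'cV[R]_d) (ts : 'I_nu -> R),
    forall pat : 'I_nu -> bool,
      exists f, F f /\ forall k, (dotv (betas k) (f (xs k)) <= ts k) = pat k.
End Defs.

Definition natarajan_shatters (X S : Type) (G : (X -> S) -> Prop) (eta : nat) : Prop :=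
  exists (xs : 'I_eta -> X) (s s' : 'I_eta -> S),
    (forall k, s k <> s' k) /\
    forall pat : 'I_eta -> bool,
      exists g, G g /\ forall k, (g (xs k) = s k \/ g (xs k) = s' k) /\
                               (g (xs k) = s k <-> pat k = true).

From HB Require Import structures.
From mathcomp Require Import all_boot all_order all_algebra.
From mathcomp Require Import boolp reals.
From mathcomp Require Import lra.
Set Implicit Arguments. Unset Strict Implicit. Unset Printing Implicit Defensive.
Import Order.TTheory GRing.Theory Num.Theory.
Local Open Scope ring_scope.

(* Suppose pi_f(x) is known to be one of two extreme points a, c, with a
   listed before c.  Then pi_f(x) = a exactly when (a - c)^T f(x) <= 0: ties
   are broken in favour of a, and if c is chosen then a is not a minimiser
   while c is.  Hence a sample x_k Natarajan-shattered with labels s_k, s'_k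
   is linear-subgraph shattered with beta_k = a_k - c_k and t_k = 0, where
   a_k is whichever label comes first in the list.  For pi_f(x) to be a true
   minimiser, a linear function must attain its minimum over the nonempty
   bounded polytope at an extreme point: from a point that is not extreme one
   can move along a non-ascent direction until a new constraint becomes
   active.  When the polytope is empty, every pi_f is the constant 0 and only
   the empty sample is shattered. *)

Lemma exists_seq_arg_min (T : choiceType) (disp : Order.disp_t)
    (O : orderType disp) (s : seq T) (F : T -> O) x0 :
  x0 \in s -> exists2 x, x \in s & {in s, forall y, (F x <= F y)%O}.
Proof.
move=> x0s; case: (@arg_minP _ _ _ (SeqSub x0s) xpredT (F \o val)) => // x _ xmin.
by exists (val x) => [|y ys]; [exact: valP | exact: (xmin (SeqSub ys))].
Qed.

Section Dotv.
Variables (R : realType) (n : nat).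
Implicit Types u v w : 'cV[R]_n.

Lemma dotvC u v : dotv u v = dotv v u.
Proof. by apply: eq_bigr => i _; rewrite mulrC. Qed.

Lemma dotvBl u v w : dotv (u - v) w = dotv u w - dotv v w.
Proof. by rewrite /dotv -sumrB; apply: eq_bigr => i _; rewrite !mxE mulrBl. Qed.

Lemma dotvNr u v : dotv u (- v) = - dotv u v.
Proof. by rewrite /dotv -sumrN; apply: eq_bigr => i _; rewrite !mxE mulrN. Qed.

Lemma dotvDZr u v w t : dotv u (v + t *: w) = dotv u v + t * dotv u w.
Proof.
rewrite /dotv mulr_sumr -big_split; apply: eq_bigr => i _.
by rewrite !mxE mulrDr mulrCA.
Qed.

End Dotv.

Section Polytope.
Variables (R : realType) (m d : nat) (A : 'M[R]_(m, d)) (b : 'cV[R]_m).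
Implicit Types c u z : 'cV[R]_d.

Definition active z : {set 'I_m} := [set i | (A *m z) i 0 == b i 0].

Lemma mulmx_rayE z u t i :
  (A *m (z + t *: u)) i 0 = (A *m z) i 0 + t * (A *m u) i 0.
Proof. by rewrite mulmxDr -scalemxAr !mxE. Qed.

Lemma nonextreme_direction z : in_poly A b z -> ~ extreme_point A b z ->
  exists2 u : 'cV[R]_d, u != 0 & {in active z, forall i, (A *m u) i 0 = 0}.
Proof.
move=> Zz nez.
have [y [w [lam [Zy Zw /andP[lam0 lam1] zE yw]]]] : exists y w lam,
    [/\ in_poly A b y, in_poly A b w, 0 < lam < 1,
        z = lam *: y + (1 - lam) *: w & y != w].
  apply: contrapT => none; apply: nez; split=> // y w lam Zy Zw lam01 zE.
  by apply/eqP; apply: contrapT => /negP yw; apply: none; exists y, w, lam.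
exists (y - w); first by rewrite subr_eq0.
have zE' : z = w + lam *: (y - w).
  by rewrite zE; apply/matrixP => i k; rewrite !mxE; lra.
have yE : y = w + 1 *: (y - w) by rewrite scale1r addrC subrK.
move=> i; rewrite inE => /eqP act_i; have := Zy i; have := Zw i.
rewrite {1}yE; move: act_i; rewrite zE' !mulmx_rayE mul1r.
set a := (A *m (y - w)) i 0 => act_i Zwi Zyi.
have : 0 <= lam * a by lra.
rewrite pmulr_rge0 // => a_ge0.
have : (1 - lam) * a <= 0 by lra.
by rewrite pmulr_rle0 ?subr_gt0 //; lra.
Qed.

Lemma bounded_poly_recession z u : bounded_poly A b -> in_poly A b z ->
  u != 0 -> exists i, 0 < (A *m u) i 0.
Proof.
move=> [M ZM] Zz /matrix0Pn[j [k]]; rewrite (ord1 k) => uj.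
apply: contrapT => /forallNP Au_le0.
have {}Au_le0 i : (A *m u) i 0 <= 0 by rewrite leNgt; apply/negP/Au_le0.
have uj_gt0 : 0 < `|u j 0| by rewrite normr_gt0.
have M_ge0 : 0 <= M by apply: le_trans (ZM z Zz j).
pose t := (M + `|z j 0| + 1) / `|u j 0|.
have t_ge0 : 0 <= t by rewrite divr_ge0 // !addr_ge0.
have Zzt : in_poly A b (z + t *: u).
  move=> i; rewrite mulmx_rayE; have := Zz i.
  by have := mulr_ge0_le0 t_ge0 (Au_le0 i); lra.
have := ZM _ Zzt j; rewrite !mxE.
have tu : `|t * u j 0| = M + `|z j 0| + 1.
  by rewrite normrM (ger0_norm t_ge0) divfK ?gt_eqF.
have := ler_normB (z j 0 + t * u j 0) (z j 0); rewrite addrAC subrr add0r tu; lra.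
Qed.

Lemma ray_step z u : in_poly A b z -> {in active z, forall i, (A *m u) i 0 = 0} ->
  (exists i, 0 < (A *m u) i 0) ->
  exists2 t, 0 <= t & in_poly A b (z + t *: u) /\ active z \proper active (z + t *: u).
Proof.
move=> Zz u_act [i0 ui0].
(* Ratio test: the largest feasible step along u, attained at constraint k. *)
pose ratio i := (b i 0 - (A *m z) i 0) / (A *m u) i 0.
case: (@arg_minP _ _ _ i0 (fun i => 0 < (A *m u) i 0) ratio ui0) => k uk kmin.
have ratio_ge0 : 0 <= ratio k by rewrite /ratio divr_ge0 ?subr_ge0 ?Zz ?ltW.
exists (ratio k) => //; split.
  move=> i; rewrite mulmx_rayE; have [ui_le0|ui_gt0] := leP ((A *m u) i 0) 0.
    by have := Zz i; have := mulr_ge0_le0 ratio_ge0 ui_le0; lra.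
  by have := kmin i ui_gt0; rewrite {2}/ratio ler_pdivlMr //; lra.
apply/properP; split.
  apply/subsetP => i iz; move: (iz).
  by rewrite !inE mulmx_rayE (u_act i iz) mulr0 addr0.
exists k; first by rewrite inE mulmx_rayE /ratio divfK ?lt0r_neq0 // addrC subrK.
by apply/negP => /u_act uk0; rewrite uk0 ltxx in uk.
Qed.

Lemma nonextreme_descent c z : bounded_poly A b -> in_poly A b z ->
  ~ extreme_point A b z ->
  exists z', [/\ in_poly A b z', dotv c z' <= dotv c z & active z \proper active z'].
Proof.
move=> Zb Zz nez; have [u0 u0_neq0 u0_act] := nonextreme_direction Zz nez.
pose u := if dotv c u0 <= 0 then u0 else - u0.
have u_neq0 : u != 0 by rewrite /u; case: ifP; rewrite ?oppr_eq0.
have u_act : {in active z, forall i, (A *m u) i 0 = 0}.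
  by move=> i /u0_act; rewrite /u; case: ifP; rewrite ?mulmxN ?mxE => _ ->; rewrite ?oppr0.
have cu : dotv c u <= 0.
  by rewrite /u; case: ifPn; rewrite // dotvNr -ltNge oppr_le0 => /ltW.
have [t t_ge0 [Zzt act_lt]] := ray_step Zz u_act (bounded_poly_recession Zb Zz u_neq0).
exists (z + t *: u); split => //.
by rewrite dotvDZr gerDl mulr_ge0_le0.
Qed.

Lemma exists_extreme_le c z : bounded_poly A b -> in_poly A b z ->
  exists v, extreme_point A b v /\ dotv c v <= dotv c z.
Proof.
move=> Zb; have [n] := ubnP #|~: active z|; elim: n z => // n IHn z lt_n Zz.
have [ez|nez] := pselect (extreme_point A b z); first by exists z.
have [z' [Zz' cz' act_lt]] := nonextreme_descent c Zb Zz nez.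
have [|v [ev cv]] := IHn z' _ Zz'.
  by rewrite -ltnS (leq_trans _ lt_n) // ltnS proper_card // properC.
by exists v; split=> //; apply: le_trans cz'.
Qed.

Lemma exists_extreme_argmin (ext : seq 'cV[R]_d) c :
  bounded_poly A b -> (exists z, in_poly A b z) ->
  (forall v, v \in ext <-> extreme_point A b v) ->
  exists2 v, v \in ext & is_argmin A b c v.
Proof.
move=> Zb [z0 Zz0] ext_extreme.
have [v0 [ev0 _]] := exists_extreme_le c Zb Zz0.
have [v vext vmin] := exists_seq_arg_min (dotv c) (proj2 (ext_extreme v0) ev0).
exists v => //; split; first by case/ext_extreme: vext.
move=> z Zz; have [w [ew cw]] := exists_extreme_le c Zb Zz.
by apply: le_trans cw; apply/vmin/ext_extreme.
Qed.

End Polytope.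

Definition natarajan_shatters_at (X S : Type) (G : (X -> S) -> Prop) (eta : nat)
    (xs : 'I_eta -> X) (s s' : 'I_eta -> S) : Prop :=
  (forall k, s k <> s' k) /\
  forall pat : 'I_eta -> bool,
    exists g, G g /\ forall k, (g (xs k) = s k \/ g (xs k) = s' k) /\
                             (g (xs k) = s k <-> pat k = true).

Section NatarajanShattering.
Variables (X S : Type) (G : (X -> S) -> Prop) (eta : nat).
Variables (xs : 'I_eta -> X) (s s' : 'I_eta -> S).

Lemma natarajan_shatters_at_range (P : S -> Prop) :
  (forall g, G g -> forall x, P (g x)) -> natarajan_shatters_at G xs s s' ->
  forall k, P (s k) /\ P (s' k).
Proof.
move=> GP [_ sh] k; split.
  have [g [Gg /(_ k) [_ [_ gs]]]] := sh xpredT.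
  by rewrite -gs //; apply: GP.
have [g [Gg /(_ k) [[gs|gs'] [gsP _]]]] := sh xpred0; first by have := gsP gs.
by rewrite -gs'; apply: GP.
Qed.

Lemma natarajan_shatters_at_swap (sw : 'I_eta -> bool) :
  natarajan_shatters_at G xs s s' ->
  natarajan_shatters_at G xs (fun k => if sw k then s' k else s k)
                             (fun k => if sw k then s k else s' k).
Proof.
move=> [ss' sh]; split=> [k|pat].
  by case: (sw k) => //; apply: nesym.
have [g [Gg gP]] := sh (fun k => sw k (+) pat k).
exists g; split=> // k; have [gss' gsP] := gP k.
case: (sw k) gsP => /= gsP; last by [].
case: gss' => [gs|gs']; split; try by [right | left].
  split=> [gs'|pk]; first by case: (ss' k); rewrite -gs -gs'.
  by move/gsP: gs; rewrite pk.
split=> // _; case pk: (pat k) => //.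
have gs : g (xs k) = s k by apply/gsP; rewrite pk.
by case: (ss' k); rewrite -gs -gs'.
Qed.

Lemma natarajan_shatters_at_const (c : S) :
  (forall g, G g -> forall x, g x = c) -> natarajan_shatters_at G xs s s' -> eta = 0%N.
Proof.
move=> Gc sh; case: (posnP eta) => [//|eta_gt0]; have [ss' _] := sh.
have [sc s'c] := natarajan_shatters_at_range (P := eq^~ c) Gc sh (Ordinal eta_gt0).
by case: (ss' (Ordinal eta_gt0)); rewrite sc s'c.
Qed.

End NatarajanShattering.

Section PluginPolicy.
Variables (R : realType) (p m d : nat) (A : 'M[R]_(m, d)) (b : 'cV[R]_m).
Variable ext : seq 'cV[R]_d.
Hypothesis ext_in_poly : {in ext, forall v, in_poly A b v}.
Hypothesis has_argmin : forall c, has (fun v => `[< is_argmin A b c v >]) ext.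
Implicit Types (f : 'cV[R]_p -> 'cV[R]_d) (x : 'cV[R]_p).

Local Notation pi := (plugin_policy A b ext).

Lemma plugin_policy_mem f x : pi f x \in ext.
Proof. by apply: mem_nth; rewrite -has_find. Qed.

Lemma plugin_policy_argmin f x : is_argmin A b (f x) (pi f x).
Proof. exact/asboolP/(nth_find 0 (has_argmin (f x))). Qed.

Lemma plugin_policy_first f x v : v \in ext ->
  (index v ext < index (pi f x) ext)%N -> ~ is_argmin A b (f x) v.
Proof.
move=> vext lt_v; apply/asboolPn; rewrite -(nth_index 0 vext).
have lt_find : (index v ext < find (fun w => `[< is_argmin A b (f x) w >]) ext)%N.
  by apply: leq_trans lt_v _; rewrite index_nth // -has_find.
by have /= -> := before_find 0 lt_find.
Qed.

Lemma plugin_policy_dotv_le0 f x a c : a \in ext -> c \in ext ->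
  (index a ext < index c ext)%N -> pi f x = a \/ pi f x = c ->
  (dotv (a - c) (f x) <= 0) = (pi f x == a).
Proof.
move=> aext cext lt_ac [pa|pc].
  rewrite pa eqxx dotvBl subr_le0 !(dotvC _ (f x)).
  by case: (plugin_policy_argmin f x); rewrite pa => _; apply; apply: ext_in_poly.
have ca : c != a by apply: contraTneq lt_ac => ->; rewrite ltnn.
rewrite pc (negbTE ca); apply/negbTE; rewrite -ltNge dotvBl subr_gt0 !(dotvC _ (f x)).
have a_not_min : ~ is_argmin A b (f x) a.
  by apply: (plugin_policy_first (f := f) (x := x) aext); rewrite pc.
have [z Zz lt_za] : exists2 z, in_poly A b z & dotv (f x) z < dotv (f x) a.
  apply: contrapT => none; apply: a_not_min; split=> [|z Zz]; first exact: ext_in_poly.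
  by rewrite leNgt; apply/negP => lt_za; apply: none; exists z.
case: (plugin_policy_argmin f x); rewrite pc => _ /(_ z Zz) le_cz.
exact: le_lt_trans le_cz lt_za.
Qed.

Lemma vc_linear_subgraph_shatters_plugin (F : ('cV[R]_p -> 'cV[R]_d) -> Prop)
    eta (xs : 'I_eta -> 'cV[R]_p) (s s' : 'I_eta -> 'cV[R]_d) :
  natarajan_shatters_at (plugin_class A b ext F) xs s s' ->
  vc_linear_subgraph_shatters F eta.
Proof.
move=> sh; have [ss' _] := sh.
have s_ext : forall k, s k \in ext /\ s' k \in ext.
  apply: (natarajan_shatters_at_range (P := fun v => v \in ext)) sh => _ [f [_ ->]] x.
  exact: plugin_policy_mem.
pose sw k := (index (s' k) ext < index (s k) ext)%N.
pose a k := if sw k then s' k else s k.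
pose c k := if sw k then s k else s' k.
have a_ext k : a k \in ext by rewrite /a; case: ifP => _; apply s_ext.
have c_ext k : c k \in ext by rewrite /c; case: ifP => _; apply s_ext.
have lt_ac k : (index (a k) ext < index (c k) ext)%N.
  rewrite /a /c /sw; case: (ltngtP (index (s' k) ext)) => // eq_idx; case: (ss' k).
  by rewrite -(nth_index 0 (s_ext k).1) -(nth_index 0 (s_ext k).2) eq_idx.
have [_ sh_ac] := natarajan_shatters_at_swap sw sh.
exists xs, (fun k => a k - c k), (fun=> 0) => pat.
have [_ [[f [Ff ->]] fP]] := sh_ac pat.
exists f; split=> // k; have [fac faP] := fP k.
by rewrite plugin_policy_dotv_le0 //; apply/eqP/idP => /faP.
Qed.

End PluginPolicy.

Lemma vc_linear_subgraph_shatters0 (R : realType) (p d : nat)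
    (F : ('cV[R]_p -> 'cV[R]_d) -> Prop) :
  (exists f, F f) -> vc_linear_subgraph_shatters F 0.
Proof.
case=> f Ff; exists (fun=> 0), (fun=> 0), (fun=> 0) => pat.
by exists f; split=> // -[].
Qed.

Theorem theorem2 (R : realType) (p d m : nat) (A : 'M[R]_(m, d)) (b : 'cV[R]_m)
  (ext : seq 'cV[R]_d) (F : ('cV[R]_p -> 'cV[R]_d) -> Prop) :
  bounded_poly A b ->
  uniq ext ->
  (forall v, v \in ext <-> extreme_point A b v) ->
  forall eta : nat, natarajan_shatters (plugin_class A b ext F) eta ->
  exists nu : nat, (eta <= nu)%N /\ vc_linear_subgraph_shatters F nu.
Proof.
(* Ties go to the first occurrence in ext, so duplicates are harmless. *)
move=> Zb _ ext_extreme eta [xs [s [s' sh]]]; exists eta; split=> //.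
have {}sh : natarajan_shatters_at (plugin_class A b ext F) xs s s' := sh.
have ext_in_poly : {in ext, forall v, in_poly A b v} by move=> v /ext_extreme[].
have [Z_neq0|Z_eq0] := pselect (exists z, in_poly A b z).
  have has_argmin c : has (fun v => `[< is_argmin A b c v >]) ext.
    have [v vext vmin] := exists_extreme_argmin c Zb Z_neq0 ext_extreme.
    by apply/hasP; exists v => //; apply/asboolP.
  exact: (vc_linear_subgraph_shatters_plugin ext_in_poly has_argmin sh).
have ext_nil : ext = [::].
  case E: ext => [//|v e]; case: Z_eq0; exists v.
  by apply: ext_in_poly; rewrite E mem_head.
have eta0 : eta = 0%N.
  apply: (natarajan_shatters_at_const (c := 0) _ sh) => _ [f [_ ->]] x.
  by rewrite /plugin_policy ext_nil nth_nil.
rewrite eta0; apply: vc_linear_subgraph_shatters0.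
by have [_ /(_ xpred0) [_ [[f [Ff _]] _]]] := sh; exists f.
Qed.
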